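(* For $p\in\mathbb{R}\setminus\{0\}$ let $A_p:\mathcal{P}^1_2\to\mathbb{R}^2$ be $A_p(\rho)=p\rho^{1/p}$ (componentwise), and let $A_\infty(\rho)=\log\rho$ (componentwise). For $p\in(1,+\infty]$ let $c_p(\rho)$ denote the curvature of the plane curve $A_p(\mathcal{P}^1_2)\subset\mathbb{R}^2$ at the point $A_p(\rho)$, i.e. for a regular parametrization $t\mapsto(x(t),y(t))$ of the curve, $c_p=\frac{|x'y''-x''y'|}{((x')^2+(y')^2)^{3/2}}$. Then: (i) if $p\in(1,2)$, the function $c_p:\mathcal{P}^1_2\to\mathbb{R}$ is strictly Schur-decreasing; (ii) if $p\in(2,+\infty]$, the function $c_p:\mathcal{P}^1_2\to\mathbb{R}$ is strictly Schur-increasing.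
   Context: $\mathcal{P}^1_2=\{\rho\in\mathbb{R}^2:\rho_1+\rho_2=1,\ \rho_i>0\}$. For $x\in\mathbb{R}^n$, $x^{\downarrow}$ is $x$ with components in decreasing order; $x\succ y$ means $\sum_{i=1}^k x^{\downarrow}_i\le\sum_{i=1}^k y^{\downarrow}_i$ for $k<n$ with equality for $k=n$. A function $f$ is strictly Schur-increasing if $x\succ y$ implies $f(x)\ge f(y)$, with strict inequality whenever $x$ is not a permutation of $y$; strictly Schur-decreasing if $x\succ y$ implies $f(x)\le f(y)$, with strict inequality whenever $x$ is not a permutation of $y$. (The curve $A_p(\mathcal{P}^1_2)$ is the pull-back picture of the $\alpha$-geometry with $p=\frac{2}{1-\alpha}$.) *)

From Stdlib Require Import Reals.
From Coquelicot Require Import Coquelicot.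
Open Scope R_scope.

Definition P12 (rho : R * R) : Prop :=
  fst rho + snd rho = 1 /\ 0 < fst rho /\ 0 < snd rho.

(* Coordinate map of A_p : componentwise s |-> p s^(1/p) for finite p (p <> 0),
   and s |-> log s for p = +oo.  (The m_infty case is never used.) *)
Definition Acomp (p : Rbar) (s : R) : R :=
  match p with
  | Finite q => q * Rpower s (1 / q)
  | _ => ln s
  end.

Definition A (p : Rbar) (rho : R * R) : R * R :=
  (Acomp p (fst rho), Acomp p (snd rho)).

Definition curve_x (p : Rbar) (t : R) : R := fst (A p (t, 1 - t)).
Definition curve_y (p : Rbar) (t : R) : R := snd (A p (t, 1 - t)).

Definition plane_curvature (x y : R -> R) (t : R) : R :=
  Rabs (Derive x t * Derive (Derive y) t - Derive (Derive x) t * Derive y t)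
  / Rpower ((Derive x t) ^ 2 + (Derive y t) ^ 2) (3 / 2).

Definition c (p : Rbar) (rho : R * R) : R :=
  plane_curvature (curve_x p) (curve_y p) (fst rho).

(* Majorization (paper's convention) for n = 2: x |> y iff
   x^down_1 <= y^down_1 and x_1 + x_2 = y_1 + y_2. *)
Definition majorizes (x y : R * R) : Prop :=
  Rmax (fst x) (snd x) <= Rmax (fst y) (snd y) /\
  fst x + snd x = fst y + snd y.

Definition is_perm2 (x y : R * R) : Prop :=
  x = y \/ x = (snd y, fst y).

Definition strictly_schur_increasing (f : R * R -> R) : Prop :=
  forall x y, P12 x -> P12 y -> majorizes x y ->
    f y <= f x /\ (~ is_perm2 x y -> f y < f x).

Definition strictly_schur_decreasing (f : R * R -> R) : Prop :=
  forall x y, P12 x -> P12 y -> majorizes x y ->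
    f x <= f y /\ (~ is_perm2 x y -> f x < f y).

From Stdlib Require Import Reals Lra.
From Coquelicot Require Import Coquelicot.
Open Scope R_scope.

(* With a = 1/p - 1 (a = -1 for p = +oo) one has A_p'(s) = s^a, so along
   t |-> A_p(t, 1 - t) the curvature is
     c_p = |a| (t (1 - t))^(a - 1) / (t^(2a) + (1 - t)^(2a))^(3/2).
   It is symmetric under t |-> 1 - t, and for a < 0 the derivative of its
   logarithm on (0, 1/2) has the sign of -(2a + 1): positive for p > 2,
   negative for 1 < p < 2.  On P^1_2, x |> y says exactly that the smaller
   coordinate of x is at least that of y, i.e. closer to 1/2, so Schur
   monotonicity is monotonicity of c_p on (0, 1/2]. *)

Lemma Rpower_pos x y : 0 < Rpower x y.
Proof. apply exp_pos. Qed.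

Lemma Rlt_Rpower_l_neg x y e : 0 < x < y -> e < 0 -> Rpower y e < Rpower x e.
Proof.
  intros Hxy He. apply exp_increasing.
  assert (ln x < ln y) by (apply ln_increasing; lra).
  nra.
Qed.

Lemma Rpower_pred x e : 0 < x -> Rpower x e = Rpower x (e - 1) * x.
Proof.
  intros Hx. replace e with (e - 1 + 1) at 1 by ring.
  now rewrite Rpower_plus, Rpower_1.
Qed.

Lemma Rpower_sqr x e : Rpower x e ^ 2 = Rpower x (2 * e).
Proof. replace (2 * e) with (e + e) by ring. rewrite Rpower_plus. ring. Qed.

Lemma is_derive_Rpower_l a x :
  0 < x -> is_derive (fun u => Rpower u a) x (a * Rpower x (a - 1)).
Proof. intros Hx. now apply is_derive_Reals, derivable_pt_lim_power. Qed.

Lemma strict_incr_of_derive_pos (f df : R -> R) (a b : R) :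
  (forall x, a <= x <= b -> is_derive f x (df x)) ->
  (forall x, a < x < b -> 0 < df x) ->
  forall x y, a <= x -> x < y -> y <= b -> f x < f y.
Proof.
  intros Hd Hpos x y Hax Hxy Hyb.
  destruct (MVT_cor2 f df x y Hxy) as [z [Hmvt Hz]].
  { intros z Hz. apply is_derive_Reals, Hd. lra. }
  assert (0 < df z) by (apply Hpos; lra).
  nra.
Qed.

Lemma P12_sym_eq_Rmin (g : R -> R) rho :
  (forall t, 0 < t < 1 -> g (1 - t) = g t) -> P12 rho ->
  g (fst rho) = g (Rmin (fst rho) (snd rho)).
Proof.
  destruct rho as [r1 r2]; unfold P12; simpl. intros Hsym [Hs [H1 H2]].
  unfold Rmin; destruct (Rle_dec r1 r2); [reflexivity|].
  replace r2 with (1 - r1) by lra. now rewrite Hsym by lra.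
Qed.

Lemma strictly_schur_increasing_of_symmetric (g : R -> R) :
  (forall t, 0 < t < 1 -> g (1 - t) = g t) ->
  (forall t1 t2, 0 < t1 -> t1 < t2 -> t2 <= 1/2 -> g t1 < g t2) ->
  strictly_schur_increasing (fun rho => g (fst rho)).
Proof.
  intros Hsym Hmono x y Px Py [Hmax _].
  rewrite (P12_sym_eq_Rmin g x), (P12_sym_eq_Rmin g y) by assumption.
  destruct x as [x1 x2], y as [y1 y2]; unfold P12, is_perm2 in *; simpl in *.
  assert (Hmin : Rmin y1 y2 <= Rmin x1 x2 <= 1/2 /\ 0 < Rmin y1 y2
                 /\ (Rmin y1 y2 = Rmin x1 x2 -> (x1, x2) = (y1, y2) \/ (x1, x2) = (y2, y1))).
  { revert Hmax; unfold Rmin, Rmax.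
    destruct (Rle_dec x1 x2), (Rle_dec y1 y2); intros;
      (split; [lra | split; [lra | intros; (left + right); f_equal; lra]]). }
  destruct Hmin as [Hle [Hpos Heq]].
  destruct (Req_dec (Rmin y1 y2) (Rmin x1 x2)) as [He | Hne].
  - rewrite He. split; [lra | intros Hnp; tauto].
  - assert (g (Rmin y1 y2) < g (Rmin x1 x2)) by (apply Hmono; lra).
    split; lra.
Qed.

Lemma strictly_schur_decreasing_of_opp (f : R * R -> R) :
  strictly_schur_increasing (fun rho => - f rho) -> strictly_schur_decreasing f.
Proof.
  intros Hinc x y Px Py Hxy. destruct (Hinc x y Px Py Hxy) as [Hle Hlt].
  split; [lra | intros Hnp; specialize (Hlt Hnp); lra].
Qed.

Definition Aexponent (p : Rbar) : R :=
  match p with Finite q => 1 / q - 1 | _ => -1 end.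

Lemma is_derive_Acomp p s :
  p <> Finite 0 -> 0 < s -> is_derive (Acomp p) s (Rpower s (Aexponent p)).
Proof.
  intros Hp Hs. destruct p as [q | |]; simpl.
  2, 3: replace (-1) with (- (1)) by ring; rewrite Rpower_Ropp, Rpower_1 by exact Hs;
    now apply is_derive_ln.
  assert (Hq : q <> 0) by (intros ->; now apply Hp).
  replace (Rpower s (1 / q - 1)) with (q * (1 / q * Rpower s (1 / q - 1))) by (field; exact Hq).
  now apply is_derive_scal, is_derive_Rpower_l.
Qed.

Definition log_curvature (a t : R) : R :=
  (a - 1) * ln (t * (1 - t)) - 3 / 2 * ln (Rpower t (2 * a) + Rpower (1 - t) (2 * a)).

Section Curve.

Variable p : Rbar.
Hypothesis Hp : p <> Finite 0.
Local Notation a := (Aexponent p).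

Lemma Derive_curve_x t : 0 < t -> Derive (curve_x p) t = Rpower t a.
Proof. intros Ht. now apply is_derive_unique, is_derive_Acomp. Qed.

Lemma Derive_curve_y t : t < 1 -> Derive (curve_y p) t = - Rpower (1 - t) a.
Proof.
  intros Ht. apply is_derive_unique.
  replace (- Rpower (1 - t) a) with (scal (-1) (Rpower (1 - t) a))
    by (unfold scal; simpl; unfold mult; simpl; ring).
  apply (is_derive_comp (Acomp p) (fun u => 1 - u)).
  - apply is_derive_Acomp; [exact Hp | lra].
  - auto_derive; [exact I | ring].
Qed.

Lemma Derive2_curve_x t : 0 < t -> Derive (Derive (curve_x p)) t = a * Rpower t (a - 1).
Proof.
  intros Ht. rewrite (Derive_ext_loc _ (fun u => Rpower u a)).
  - now apply is_derive_unique, is_derive_Rpower_l.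
  - apply (locally_interval _ t 0 p_infty); [exact Ht | exact I |].
    intros u Hu _. now apply Derive_curve_x.
Qed.

Lemma Derive2_curve_y t : t < 1 -> Derive (Derive (curve_y p)) t = a * Rpower (1 - t) (a - 1).
Proof.
  intros Ht. rewrite (Derive_ext_loc _ (fun u => - Rpower (1 - u) a)).
  - apply is_derive_unique.
    replace (a * Rpower (1 - t) (a - 1)) with (- scal (-1) (a * Rpower (1 - t) (a - 1)))
      by (unfold scal; simpl; unfold mult; simpl; ring).
    apply (is_derive_opp (fun u => Rpower (1 - u) a)).
    apply (is_derive_comp (fun u => Rpower u a) (fun u => 1 - u)).
    + apply is_derive_Rpower_l. lra.
    + auto_derive; [exact I | ring].
  - apply (locally_interval _ t m_infty 1); [exact I | exact Ht |].
    intros u _ Hu. now apply Derive_curve_y.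
Qed.

Lemma curvature_curve_eq t : 0 < t < 1 ->
  plane_curvature (curve_x p) (curve_y p) t = Rabs a * exp (log_curvature a t).
Proof.
  intros Ht. unfold plane_curvature.
  rewrite Derive_curve_x, Derive_curve_y, Derive2_curve_x, Derive2_curve_y by lra.
  assert (Hnum : Rpower t a * (a * Rpower (1 - t) (a - 1))
                 - a * Rpower t (a - 1) * - Rpower (1 - t) a
                 = a * Rpower (t * (1 - t)) (a - 1)).
  { rewrite <- Rpower_mult_distr, (Rpower_pred t a), (Rpower_pred (1 - t) a) by lra.
    ring. }
  assert (Hden : Rpower t a ^ 2 + (- Rpower (1 - t) a) ^ 2
                 = Rpower t (2 * a) + Rpower (1 - t) (2 * a)).
  { rewrite <- !Rpower_sqr. ring. }
  assert (Hexp : exp (log_curvature a t)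
                 = Rpower (t * (1 - t)) (a - 1)
                   / Rpower (Rpower t (2 * a) + Rpower (1 - t) (2 * a)) (3 / 2)).
  { unfold log_curvature, Rminus at 1, Rpower, Rdiv.
    now rewrite exp_plus, exp_Ropp. }
  rewrite Hnum, Hden, Hexp, Rabs_mult, (Rabs_pos_eq (Rpower _ _)) by (left; apply Rpower_pos).
  field. apply Rgt_not_eq, Rpower_pos.
Qed.

End Curve.

Definition log_curvature_deriv (a t : R) : R :=
  ((-2 * a - 1) * (Rpower t (2 * a) * (1 - t) - Rpower (1 - t) (2 * a) * t)
   + (1 - a) * (Rpower t (2 * a) * t - Rpower (1 - t) (2 * a) * (1 - t)))
  / (t * (1 - t) * (Rpower t (2 * a) + Rpower (1 - t) (2 * a))).

Lemma is_derive_log_curvature a t :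
  0 < t < 1 -> is_derive (log_curvature a) t (log_curvature_deriv a t).
Proof.
  intros Ht.
  assert (HTS : 0 < Rpower t (2 * a) + Rpower (1 - t) (2 * a))
    by (apply Rplus_lt_0_compat; apply Rpower_pos).
  unfold log_curvature, log_curvature_deriv. unfold Rpower in *.
  auto_derive; replace (1 + - t) with (1 - t) by ring.
  - repeat split; nra.
  - field. repeat split; lra.
Qed.

Lemma log_curvature_deriv_den_pos a t :
  0 < t < 1 -> 0 < t * (1 - t) * (Rpower t (2 * a) + Rpower (1 - t) (2 * a)).
Proof.
  intros Ht. apply Rmult_lt_0_compat; [nra |].
  apply Rplus_lt_0_compat; apply Rpower_pos.
Qed.

(* Both sign lemmas rest on t^(2a) > (1-t)^(2a) for t < 1/2, while the sign of
   t^(2a+1) - (1-t)^(2a+1) flips at a = -1/2. *)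
Lemma log_curvature_deriv_pos a t :
  a < -1/2 -> 0 < t < 1/2 -> 0 < log_curvature_deriv a t.
Proof.
  intros Ha Ht. unfold log_curvature_deriv.
  apply Rdiv_lt_0_compat; [| apply log_curvature_deriv_den_pos; lra].
  assert (Heven : Rpower (1 - t) (2 * a) < Rpower t (2 * a))
    by (apply Rlt_Rpower_l_neg; lra).
  assert (Hodd : Rpower (1 - t) (2 * a + 1) < Rpower t (2 * a + 1))
    by (apply Rlt_Rpower_l_neg; lra).
  rewrite (Rpower_pred t), (Rpower_pred (1 - t)) in Hodd by lra.
  replace (2 * a + 1 - 1) with (2 * a) in Hodd by ring.
  assert (Hcross : 0 < Rpower t (2 * a) * (1 - t) - Rpower (1 - t) (2 * a) * t)
    by (pose proof (Rpower_pos (1 - t) (2 * a)); nra).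
  apply Rplus_lt_0_compat; apply Rmult_lt_0_compat; lra.
Qed.

Lemma log_curvature_deriv_neg a t :
  -1/2 < a < 0 -> 0 < t < 1/2 -> log_curvature_deriv a t < 0.
Proof.
  intros Ha Ht. unfold log_curvature_deriv.
  apply Rdiv_neg_pos; [| apply log_curvature_deriv_den_pos; lra].
  assert (Heven : Rpower (1 - t) (2 * a) < Rpower t (2 * a))
    by (apply Rlt_Rpower_l_neg; lra).
  assert (Hodd : Rpower t (2 * a + 1) < Rpower (1 - t) (2 * a + 1))
    by (apply Rlt_Rpower_l; lra).
  rewrite (Rpower_pred t), (Rpower_pred (1 - t)) in Hodd by lra.
  replace (2 * a + 1 - 1) with (2 * a) in Hodd by ring.
  assert (Hcross : 0 < Rpower t (2 * a) * (1 - t) - Rpower (1 - t) (2 * a) * t)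
    by (pose proof (Rpower_pos (1 - t) (2 * a)); nra).
  assert (0 < (2 * a + 1) * (Rpower t (2 * a) * (1 - t) - Rpower (1 - t) (2 * a) * t))
    by (apply Rmult_lt_0_compat; lra).
  assert (0 < (1 - a) * (Rpower (1 - t) (2 * a) * (1 - t) - Rpower t (2 * a) * t))
    by (apply Rmult_lt_0_compat; lra).
  lra.
Qed.

Lemma log_curvature_sym a t : log_curvature a (1 - t) = log_curvature a t.
Proof.
  unfold log_curvature. replace (1 - (1 - t)) with t by ring.
  rewrite (Rmult_comm (1 - t)), (Rplus_comm (Rpower (1 - t) _)). reflexivity.
Qed.

Lemma log_curvature_increasing a t1 t2 :
  a < -1/2 -> 0 < t1 -> t1 < t2 -> t2 <= 1/2 -> log_curvature a t1 < log_curvature a t2.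
Proof.
  intros Ha Ht1 Ht12 Ht2.
  apply (strict_incr_of_derive_pos _ (log_curvature_deriv a) t1 (1/2)); try lra.
  - intros t Ht. apply is_derive_log_curvature. lra.
  - intros t Ht. apply log_curvature_deriv_pos; lra.
Qed.

Lemma log_curvature_decreasing a t1 t2 :
  -1/2 < a < 0 -> 0 < t1 -> t1 < t2 -> t2 <= 1/2 -> log_curvature a t2 < log_curvature a t1.
Proof.
  intros Ha Ht1 Ht12 Ht2. apply Ropp_lt_cancel.
  apply (strict_incr_of_derive_pos (fun t => - log_curvature a t)
           (fun t => - log_curvature_deriv a t) t1 (1/2)); try lra.
  - intros t Ht. apply (is_derive_opp (log_curvature a) t (log_curvature_deriv a t)).
    apply is_derive_log_curvature. lra.
  - intros t Ht. apply Ropp_0_gt_lt_contravar, log_curvature_deriv_neg; lra.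
Qed.

Lemma c_strictly_schur_increasing p :
  p <> Finite 0 -> Aexponent p < -1/2 -> strictly_schur_increasing (c p).
Proof.
  intros Hp Ha.
  apply (strictly_schur_increasing_of_symmetric (plane_curvature (curve_x p) (curve_y p))).
  - intros t Ht. now rewrite !curvature_curve_eq, log_curvature_sym by (auto; lra).
  - intros t1 t2 Ht1 Ht12 Ht2. rewrite !curvature_curve_eq by (auto; lra).
    apply Rmult_lt_compat_l; [apply Rabs_pos_lt; lra |].
    now apply exp_increasing, log_curvature_increasing.
Qed.

Lemma c_strictly_schur_decreasing p :
  p <> Finite 0 -> -1/2 < Aexponent p < 0 -> strictly_schur_decreasing (c p).
Proof.
  intros Hp Ha. apply strictly_schur_decreasing_of_opp.
  apply (strictly_schur_increasing_of_symmetric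
           (fun t => - plane_curvature (curve_x p) (curve_y p) t)).
  - intros t Ht. now rewrite !curvature_curve_eq, log_curvature_sym by (auto; lra).
  - intros t1 t2 Ht1 Ht12 Ht2. rewrite !curvature_curve_eq by (auto; lra).
    apply Ropp_lt_contravar, Rmult_lt_compat_l; [apply Rabs_pos_lt; lra |].
    now apply exp_increasing, log_curvature_decreasing.
Qed.

Theorem mainTheorem3 :
  (forall p : R, 1 < p < 2 -> strictly_schur_decreasing (c (Finite p))) /\
  (forall p : Rbar, Rbar_lt 2 p -> strictly_schur_increasing (c p)).
Proof.
  split.
  - intros p Hp. apply c_strictly_schur_decreasing.
    + intros H. injection H. lra.
    + simpl. assert (Hinv : 1 / p * p = 1) by (field; lra). nra.
  - intros [q | |] Hp; simpl in Hp; try contradiction.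
    + apply c_strictly_schur_increasing.
      * intros H. injection H. lra.
      * simpl. assert (Hinv : 1 / q * q = 1) by (field; lra). nra.
    + apply c_strictly_schur_increasing; simpl; [discriminate | lra].
Qed.
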